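(* Assume the setting and notation described in the context, and suppose the event $\mathcal{E}$ holds. Let $\gamma\in(0,1)$ and let $k'\ge k$ be an integer. Let $\mathbf{w}^{(0)}$ be the output $\hat{\mathbf{v}}$ of the SEP algorithm, and suppose its final support $S^{(k)}$ satisfies $\|\mathbf{v}_{S^{(k)}}\|_2\ge\sqrt{\gamma}$. Let $\mathbf{w}^{(T)}$ be the $T$-th iterate of the TPower refinement with keep-$k'$ thresholding started from $\mathbf{w}^{(0)}$. There exist absolute constants $C_1,C_2>0$ such that if $$ m\ \ge\ C_1\frac{(1+\theta)^2}{\theta^2\gamma^2}k'\log n, $$ then $$ \sin\angle\big(\mathbf{w}^{(T)},\mathbf{v}\big)\ \le\ C_2\frac{1+\theta}{\theta\gamma}\sqrt{\frac{k'\log n}{m}}\qquad\text{for all } T\ge 1. $$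
   Context: Let $n\ge 2$, $m\ge 1$, $\theta>0$, $k\in\{1,\dots,n\}$. Let $\mathbf{v}\in\mathbb{R}^n$ with $\|\mathbf{v}\|_2=1$ and at most $k$ nonzero entries. Let $\mathbf{x}_1,\dots,\mathbf{x}_m$ be i.i.d. $\mathcal{N}(\mathbf{0},\mathbf{I}_n+\theta\mathbf{v}\mathbf{v}^\top)$. Put $\hat{\boldsymbol{\Sigma}}=\frac1m\sum_i\mathbf{x}_i\mathbf{x}_i^\top$, $\hat{\boldsymbol{\Gamma}}=\hat{\boldsymbol{\Sigma}}-\mathbf{I}_n$, $\mathbf{W}=\hat{\boldsymbol{\Gamma}}-\theta\mathbf{v}\mathbf{v}^\top$. $\mathbf{A}_{S,U}$ denotes a submatrix, $\mathbf{v}_S$ the restriction of $\mathbf{v}$ to $S\subseteq[n]$; $\|\cdot\|_2$ is the Euclidean/spectral norm. For unit vectors, $\sin\angle(\mathbf{a},\mathbf{b})=\sqrt{1-\langle\mathbf{a},\mathbf{b}\rangle^2}$. Fix an absolute constant $C_0>0$; the event $\mathcal{E}$ is: for all $p\in[n]$ and all $S\subseteq[n]$ with $|S|=p$, $\|\mathbf{W}_{S,S}\|_2\le C_0(1+\theta)\sqrt{p\log n/m}$. ''Absolute constant'' means independent of $n,m,k,k',\theta,\mathbf{v},\gamma,T$. SEP algorithm: $S^{(1)}=\{j^\ast\}$ with $j^\ast$ maximizing $|\hat{\boldsymbol{\Gamma}}_{jj}|$; for $p=1,\dots,k-1$, $\hat{\mathbf{e}}^{(p)}$ is a unit top eigenvector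 (largest eigenvalue) of $\hat{\boldsymbol{\Gamma}}_{S^{(p)},S^{(p)}}$ zero-padded to $\mathbb{R}^n$, and $S^{(p+1)}$ is the index set of the $p+1$ largest entries of $|\hat{\boldsymbol{\Gamma}}\hat{\mathbf{e}}^{(p)}|$; output $\hat{\mathbf{v}}$ is a unit top eigenvector of $\hat{\boldsymbol{\Gamma}}_{S^{(k)},S^{(k)}}$ zero-padded to $\mathbb{R}^n$. TPower refinement with keep-$k'$ thresholding: $\mathbf{w}^{(t+1)}=\mathcal{H}_{k'}(\hat{\boldsymbol{\Gamma}}\mathbf{w}^{(t)})/\|\mathcal{H}_{k'}(\hat{\boldsymbol{\Gamma}}\mathbf{w}^{(t)})\|_2$, where $\mathcal{H}_{k'}$ keeps the $k'$ largest-magnitude entries of a vector and sets the others to zero. *)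

From HB Require Import structures.
From mathcomp Require Import all_boot all_order all_algebra.
From mathcomp Require Import all_classical all_reals all_analysis.
Set Implicit Arguments. Unset Strict Implicit. Unset Printing Implicit Defensive.
Import Order.TTheory GRing.Theory Num.Theory.
Local Open Scope classical_set_scope.
Local Open Scope ring_scope.

Section Defs.
Variable R : realType.

Definition norm2 (p : nat) (x : 'cV[R]_p) : R := Num.sqrt (\sum_i (x i 0) ^+ 2).
Definition dotv (p : nat) (x y : 'cV[R]_p) : R := \sum_i x i 0 * y i 0.

(* sin of the angle between (unit) vectors *)
Definition sin_angle (p : nat) (a b : 'cV[R]_p) : R := Num.sqrt (1 - (dotv a b) ^+ 2).

Definition spec_norm (p q : nat) (A : 'M[R]_(p, q)) : R :=
  sup [set norm2 (A *m x) | x in [set x : 'cV[R]_q | norm2 x = 1]].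

(* principal submatrix A_{S,S} (rows/cols of S in increasing order) *)
Definition subSS (n : nat) (A : 'M[R]_n) (S : {set 'I_n}) : 'M[R]_#|S| :=
  mxsub (@enum_val _ (mem S)) (@enum_val _ (mem S)) A.

Definition restr_norm (n : nat) (v : 'cV[R]_n) (S : {set 'I_n}) : R :=
  Num.sqrt (\sum_(i in S) (v i 0) ^+ 2).

Definition supp (n : nat) (v : 'cV[R]_n) : {set 'I_n} := [set i | v i 0 != 0].

Definition top_eigvec (n : nat) (A : 'M[R]_n) (S : {set 'I_n}) (u : 'cV[R]_n) : Prop :=
  exists (y : 'cV[R]_#|S|) (lam : R),
    [/\ norm2 y = 1,
        subSS A S *m y = lam *: y,
        (forall (mu : R) (z : 'cV[R]_#|S|), z != 0 -> subSS A S *m z = mu *: z -> mu <= lam),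
        (forall j : 'I_#|S|, u (enum_val j) 0 = y j 0) &
        (forall i, i \notin S -> u i 0 = 0)].

Definition top_entries (n : nat) (g : 'cV[R]_n) (r : nat) (S : {set 'I_n}) : Prop :=
  #|S| = r /\ (forall i j, i \in S -> j \notin S -> `|g j 0| <= `|g i 0|).

Definition hard_thresh (n : nat) (k' : nat) (g h : 'cV[R]_n) : Prop :=
  exists S : {set 'I_n}, top_entries g (minn k' n) S /\
    (forall i, h i 0 = if i \in S then g i 0 else 0).

(* A possible run of SEP on Gamma with sparsity k: supports S^(1..k),
   intermediate vectors e^(1..k-1), and output w0 *)
Definition SEP_run (n : nat) (Gam : 'M[R]_n) (k : nat)
    (S : nat -> {set 'I_n}) (e : nat -> 'cV[R]_n) (w0 : 'cV[R]_n) : Prop :=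
  [/\ (exists jstar : 'I_n, S 1%N = [set jstar]%SET /\
         forall j : 'I_n, `|Gam j j| <= `|Gam jstar jstar|),
      (forall p : nat, (1 <= p <= k.-1)%N ->
         top_eigvec Gam (S p) (e p) /\ top_entries (Gam *m e p) p.+1 (S p.+1)) &
      top_eigvec Gam (S k) w0].

Definition tpower_run (n : nat) (Gam : 'M[R]_n) (k' : nat)
    (w0 : 'cV[R]_n) (w : nat -> 'cV[R]_n) : Prop :=
  w 0%N = w0 /\
  forall t : nat, exists h : 'cV[R]_n,
    hard_thresh k' (Gam *m w t) h /\ w t.+1 = (norm2 h)^-1 *: h.

(* sample covariance, Gamma-hat, W, from the samples x_1..x_m (columns of X) *)
Definition Sigma_hat (n m : nat) (X : 'M[R]_(n, m)) : 'M[R]_n :=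
  (m%:R)^-1 *: (X *m X^T).
Definition Gamma_hat (n m : nat) (X : 'M[R]_(n, m)) : 'M[R]_n := Sigma_hat X - 1%:M.
Definition W_mat (n m : nat) (X : 'M[R]_(n, m)) (theta : R) (v : 'cV[R]_n) : 'M[R]_n :=
  Gamma_hat X - theta *: (v *m v^T).

Definition event_E (n m : nat) (X : 'M[R]_(n, m)) (theta : R) (v : 'cV[R]_n) (C0 : R) : Prop :=
  forall S : {set 'I_n}, (0 < #|S|)%N ->
    spec_norm (subSS (W_mat X theta v) S)
      <= C0 * (1 + theta) * Num.sqrt (#|S|%:R * ln (n%:R) / m%:R).

End Defs.

(* Write Gamma_hat = W + theta v v^T.  On every index set F with |F| <= 3k',
   the event E bounds the spectral norm of W_{F,F} by
   D = C0 (1 + theta) sqrt (3 k' log n / m), and the sample-size condition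
   makes 48 D^2 <= theta^2 gamma^2.
   SEP: the top eigenvalue of Gamma_hat_{S,S} dominates every Rayleigh
   quotient (their maximum over the compact sphere is an eigenvalue), in
   particular the one at v_S, which is at least theta |v_S|^2 - D >=
   theta gamma - D; at the output it is at most theta <v, w0>^2 + D.
   As 4 D <= theta gamma, this gives <v, w0>^2 >= gamma / 2.
   TPower: if <v, w>^2 >= gamma / 2 then Gamma_hat w = W w + a v with
   a = theta <v, w>.  Keeping the k' largest entries only drops entries on
   supp v that are dominated by kept entries of W w, so the thresholded vector
   is a v + r with |r|^2 <= 3 D^2, whence
   sin^2 <= 4 |r|^2 / a^2 <= 24 D^2 / (theta^2 gamma) <= 1/2;
   this restores <v, w>^2 >= gamma / 2 for the next step. *)

From Pilot Require Import Defs.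
From HB Require Import structures.
From mathcomp Require Import all_boot all_order all_algebra.
From mathcomp Require Import all_classical all_reals all_analysis.
From mathcomp Require Import ring lra zify.
Import Order.TTheory GRing.Theory Num.Theory.
Import numFieldTopology.Exports numFieldNormedType.Exports.
Set Implicit Arguments. Unset Strict Implicit. Unset Printing Implicit Defensive.
Local Open Scope classical_set_scope.
Local Open Scope ring_scope.

(* [Defs.subSS] and the [finset.]/[fintype.] set lemmas are qualified because
   ssrnat's lemma [subSS] and the classical_sets lemmas of the same names
   shadow them. *)

Section Euclid.
Variable R : realType.
Implicit Types (p q : nat).

Definition sqnorm p (x : 'cV[R]_p) : R := \sum_i x i 0 ^+ 2.

Lemma sqnorm_ge0 p (x : 'cV[R]_p) : 0 <= sqnorm x.
Proof. by apply: sumr_ge0 => i _; exact: sqr_ge0. Qed.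

Lemma norm2E p (x : 'cV[R]_p) : norm2 x = Num.sqrt (sqnorm x).
Proof. by []. Qed.

Lemma sqr_norm2 p (x : 'cV[R]_p) : norm2 x ^+ 2 = sqnorm x.
Proof. by rewrite sqr_sqrtr // sqnorm_ge0. Qed.

Lemma norm2_ge0 p (x : 'cV[R]_p) : 0 <= norm2 x.
Proof. exact: sqrtr_ge0. Qed.

Lemma sqnorm_unit p (x : 'cV[R]_p) : norm2 x = 1 -> sqnorm x = 1.
Proof. by move=> x1; rewrite -sqr_norm2 x1 expr1n. Qed.

Lemma sqnorm0 p : sqnorm (0 : 'cV[R]_p) = 0.
Proof. by rewrite /sqnorm big1 // => i _; rewrite mxE expr0n. Qed.

Lemma sqnorm_eq0 p (x : 'cV[R]_p) : (sqnorm x == 0) = (x == 0).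
Proof.
apply/idP/idP => [/eqP x0|/eqP ->]; last by rewrite sqnorm0.
apply/eqP/matrixP => i j; rewrite (ord1 j) mxE.
have /eqP := psumr_eq0P (fun i _ => sqr_ge0 (x i 0)) x0 (i := i) isT.
by rewrite sqrf_eq0 => /eqP.
Qed.

Lemma sqnorm_gt0 p (x : 'cV[R]_p) : (0 < sqnorm x) = (x != 0).
Proof. by rewrite lt_def sqnorm_eq0 sqnorm_ge0 andbT. Qed.

Lemma dotvv p (x : 'cV[R]_p) : dotv x x = sqnorm x.
Proof. by apply: eq_bigr => i _; rewrite expr2. Qed.

Lemma dotv0l p (y : 'cV[R]_p) : dotv 0 y = 0.
Proof. by rewrite /dotv big1 // => i _; rewrite mxE mul0r. Qed.

Lemma dotvC p (x y : 'cV[R]_p) : dotv x y = dotv y x.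
Proof. by apply: eq_bigr => i _; rewrite mulrC. Qed.

Lemma dotvDl p (x y z : 'cV[R]_p) : dotv (x + y) z = dotv x z + dotv y z.
Proof. by rewrite /dotv -big_split; apply: eq_bigr => i _; rewrite mxE mulrDl. Qed.

Lemma dotvDr p (x y z : 'cV[R]_p) : dotv z (x + y) = dotv z x + dotv z y.
Proof. by rewrite dotvC dotvDl !(dotvC z). Qed.

Lemma dotvZl p (a : R) (x y : 'cV[R]_p) : dotv (a *: x) y = a * dotv x y.
Proof. by rewrite /dotv mulr_sumr; apply: eq_bigr => i _; rewrite mxE mulrA. Qed.

Lemma dotvZr p (a : R) (x y : 'cV[R]_p) : dotv y (a *: x) = a * dotv y x.
Proof. by rewrite dotvC dotvZl dotvC. Qed.

Lemma dotv_mulmx p (A : 'M[R]_p) (x y : 'cV[R]_p) :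
  dotv x (A *m y) = dotv (A^T *m x) y.
Proof.
rewrite /dotv.
under eq_bigr do rewrite mxE big_distrr /=.
under [RHS]eq_bigr do rewrite mxE big_distrl /=.
rewrite exchange_big /=; apply: eq_bigr => i _; apply: eq_bigr => j _.
by rewrite mxE mulrCA mulrA.
Qed.

Lemma mulmx_rank_one p (B : 'M[R]_p) (a : R) (x y : 'cV[R]_p) :
  (B + a *: (x *m x^T)) *m y = B *m y + (a * dotv x y) *: x.
Proof.
apply/matrixP => i j; rewrite (ord1 j) !mxE /dotv mulr_sumr mulr_suml -big_split /=.
by apply: eq_bigr => l _; rewrite !mxE big_ord1 !mxE; ring.
Qed.

Lemma sqnormZ p (a : R) (x : 'cV[R]_p) : sqnorm (a *: x) = a ^+ 2 * sqnorm x.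
Proof. by rewrite -!dotvv dotvZl dotvZr mulrA -expr2. Qed.

Lemma sqnormD p (x y : 'cV[R]_p) :
  sqnorm (x + y) = sqnorm x + 2 * dotv x y + sqnorm y.
Proof. by rewrite -!dotvv dotvDl !dotvDr (dotvC y x); ring. Qed.

Lemma norm2Z p (a : R) (x : 'cV[R]_p) : norm2 (a *: x) = `|a| * norm2 x.
Proof. by rewrite !norm2E sqnormZ sqrtrM ?sqr_ge0 // sqrtr_sqr. Qed.

Lemma cauchy_schwarz p (x y : 'cV[R]_p) : dotv x y ^+ 2 <= sqnorm x * sqnorm y.
Proof.
have [->|x0] := eqVneq x 0; first by rewrite sqnorm0 mul0r dotv0l expr0n.
have xp : 0 < sqnorm x by rewrite sqnorm_gt0.
(* [t] minimises [|y - t x|^2] *)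
pose t := dotv x y / sqnorm x.
have : 0 <= sqnorm (y - t *: x) by exact: sqnorm_ge0.
have -> : sqnorm (y - t *: x) = sqnorm y - dotv x y ^+ 2 / sqnorm x.
  rewrite sqnormD -scaleNr sqnormZ dotvZr (dotvC y x) /t.
  by field; rewrite gt_eqF.
by rewrite subr_ge0 ler_pdivrMr // mulrC.
Qed.

Lemma normr_dotv_le p (x y : 'cV[R]_p) : `|dotv x y| <= norm2 x * norm2 y.
Proof.
rewrite -ler_sqr ?nnegrE ?mulr_ge0 ?norm2_ge0 //.
by rewrite real_normK ?num_real // exprMn !sqr_norm2 cauchy_schwarz.
Qed.

End Euclid.

Section SpectralNorm.
Variable R : realType.
Implicit Types (p q : nat).

Lemma sqnorm_mulmx_le_frobenius p q (B : 'M[R]_(p, q)) (u : 'cV[R]_q) :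
  sqnorm (B *m u) <= (\sum_i \sum_j B i j ^+ 2) * sqnorm u.
Proof.
rewrite /sqnorm mulr_suml; apply: ler_sum => i _.
have -> : (B *m u) i 0 = dotv (row i B)^T u.
  by rewrite mxE; apply: eq_bigr => j _; rewrite !mxE.
have -> : \sum_j B i j ^+ 2 = sqnorm (row i B)^T by apply: eq_bigr => j _; rewrite !mxE.
exact: cauchy_schwarz.
Qed.

Lemma norm2_mulmx_le p q (B : 'M[R]_(p, q)) (u : 'cV[R]_q) :
  norm2 (B *m u) <= spec_norm B * norm2 u.
Proof.
have [->|u0] := eqVneq u 0.
  by rewrite mulmx0 !norm2E !sqnorm0 sqrtr0 mulr0.
have nu : 0 < norm2 u by rewrite sqrtr_gt0 sqnorm_gt0.
have unit_le x : norm2 x = 1 -> norm2 (B *m x) <= spec_norm B.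
  move=> x1; apply: sup_upper_bound; last by exists x.
  split; first by exists (norm2 (B *m x)), x.
  exists (Num.sqrt (\sum_i \sum_j B i j ^+ 2)) => _ [y /= y1 <-].
  rewrite ler_sqrt; last by do 2![apply: sumr_ge0 => ? _]; exact: sqr_ge0.
  by apply: le_trans (sqnorm_mulmx_le_frobenius _ _) _; rewrite sqnorm_unit // mulr1.
have ui : 0 <= (norm2 u)^-1 by rewrite invr_ge0 ltW.
have := unit_le ((norm2 u)^-1 *: u).
rewrite -scalemxAr !norm2Z ger0_norm // mulVf ?gt_eqF // ler_pdivrMl // mulrC.
by apply.
Qed.

Lemma normr_quad_le p (B : 'M[R]_p) (D : R) (x : 'cV[R]_p) :
  spec_norm B <= D -> `|dotv x (B *m x)| <= D * sqnorm x.
Proof.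
move=> BD; apply: le_trans (normr_dotv_le _ _) _.
rewrite -sqr_norm2 expr2 mulrCA ler_wpM2l ?norm2_ge0 //.
apply: le_trans (norm2_mulmx_le _ _) _.
by rewrite ler_wpM2r ?norm2_ge0.
Qed.

End SpectralNorm.

Section Rayleigh.
Variable R : realType.
Implicit Types (p : nat).

Lemma sqnorm_trmx p (r : 'rV[R]_p) : sqnorm r^T = \sum_i r ord0 i ^+ 2.
Proof. by apply: eq_bigr => i _; rewrite mxE. Qed.

Lemma unit_sphere_compact p : compact [set r : 'rV[R]_p | sqnorm r^T = 1].
Proof.
pose cube := [set r : 'rV[R]_p | forall i, `[(-1 : R), 1]%classic (r ord0 i)].
apply: (@subclosed_compact _ _ cube).
- have -> : [set r : 'rV[R]_p | sqnorm r^T = 1] =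
            (fun r : 'rV[R]_p => \sum_i r ord0 i ^+ 2) @^-1` [set 1].
    by apply/seteqP; split => r /=; rewrite sqnorm_trmx.
  apply: preimage_closed; last exact: closed_eq.
  move=> r _; apply: continuous_big => [|i _]; first exact: add_continuous.
  have -> : (fun r : 'rV[R]_p => r ord0 i ^+ 2) =
            (fun r => r ord0 i) \* (fun r => r ord0 i).
    by apply: funext => s; rewrite /= expr2.
  by move=> x; apply: continuousM; exact: coord_continuous.
- exact: (rV_compact (fun=> @segment_compact R (-1) 1)).
- move=> r /= r1 i; rewrite /= in_itv /=.
  have : r ord0 i ^+ 2 <= 1.
    rewrite -r1 sqnorm_trmx (bigD1 i) //= lerDl.
    by apply: sumr_ge0 => j _; exact: sqr_ge0.
  by move=> ?; apply/andP; split; nra.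
Qed.

Lemma rayleigh_max_exists p (A : 'M[R]_p.+1) : exists2 z : 'cV[R]_p.+1,
  sqnorm z = 1 & forall x, dotv x (A *m x) <= dotv z (A *m z) * sqnorm x.
Proof.
pose f (r : 'rV[R]_p.+1) := \sum_i r ord0 i * \sum_j A i j * r ord0 j.
have fE r : f r = dotv r^T (A *m r^T).
  apply: eq_bigr => i _; rewrite !mxE; congr (_ * _).
  by apply: eq_bigr => j _; rewrite mxE.
have f_cont : continuous f.
  apply: continuous_big => [|i _ r]; first exact: add_continuous.
  apply: continuousM; first exact: coord_continuous.
  apply: continuous_big => [|j _ s]; first exact: add_continuous.
  by apply: continuousM; [exact: cst_continuous | exact: coord_continuous].
have sphere0 : [set r : 'rV[R]_p.+1 | sqnorm r^T = 1] !=set0.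
  exists (delta_mx 0 0); rewrite /= sqnorm_trmx (bigD1 ord0) //= big1.
    by rewrite mxE /= expr1n addr0.
  by move=> i /negbTE i0; rewrite mxE i0 /= expr0n.
have [c c1 cmax] := compact_EVT_max sphere0 (@unit_sphere_compact p.+1)
  (continuous_subspaceT f_cont).
exists c^T; first by move: c1; rewrite inE.
move=> x; have [->|x0] := eqVneq x 0; first by rewrite sqnorm0 mulr0 dotv0l.
have nx : 0 < norm2 x by rewrite sqrtr_gt0 sqnorm_gt0.
have := cmax ((norm2 x)^-1 *: x)^T; rewrite !fE trmxK -scalemxAr dotvZl dotvZr.
rewrite mulrA -expr2 exprVn sqr_norm2 ler_pdivrMl ?sqnorm_gt0 // mulrC; apply.
by rewrite inE /= trmxK sqnormZ exprVn sqr_norm2 mulVf // gt_eqF // sqnorm_gt0.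
Qed.

Lemma le0_of_quadratic (b c : R) :
  (forall t, 0 < t -> t * b + t ^+ 2 * c <= 0) -> b <= 0.
Proof.
move=> quad; rewrite leNgt; apply/negP => b0.
have c1 : 0 < `|c| + 1 by rewrite ltr_pwDr // normr_ge0.
pose t := b / (`|c| + 1).
have t0 : 0 < t by rewrite divr_gt0.
have tc : t * `|c| < b by rewrite /t mulrAC ltr_pdivrMr // ltr_pM2l // ltrDl.
have := quad t t0; have := lerNnormlW (lexx `|c|); have := ler_normr c; nra.
Qed.

Lemma rayleigh_max_eigen p (A : 'M[R]_p) (z : 'cV[R]_p) :
  A^T = A -> sqnorm z = 1 ->
  (forall x, dotv x (A *m x) <= dotv z (A *m z) * sqnorm x) ->
  A *m z = dotv z (A *m z) *: z.
Proof.
move=> As z1 zmax; set mu := dotv z (A *m z).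
pose y := A *m z - mu *: z.
have Azy : A *m z = y + mu *: z by rewrite subrK.
clearbody y.
have yAz : dotv y (A *m z) = sqnorm y + mu * dotv y z.
  by rewrite Azy dotvDr dotvZr dotvv.
have zAy : dotv z (A *m y) = dotv y (A *m z) by rewrite dotv_mulmx As dotvC.
(* first-order optimality of [z] along the residual [y] forces [y = 0] *)
have /le0_of_quadratic : forall t, 0 < t ->
    t * (2 * sqnorm y) + t ^+ 2 * (dotv y (A *m y) - mu * sqnorm y) <= 0.
  move=> t _; have := zmax (z + t *: y).
  rewrite mulmxDr -scalemxAr !dotvDl !dotvDr !dotvZl !dotvZr sqnormD sqnormZ.
  rewrite dotvZr z1 -/mu zAy yAz (dotvC z y).
  lra.
rewrite pmulr_rle0 // => y0.
suff y_eq0 : y = 0 by rewrite Azy y_eq0 add0r.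
by apply/eqP; rewrite -sqnorm_eq0 eq_le y0 sqnorm_ge0.
Qed.

Lemma rayleigh_le_eigval_ub p (A : 'M[R]_p) (lam : R) : (0 < p)%N -> A^T = A ->
  (forall (mu : R) (z : 'cV[R]_p), z != 0 -> A *m z = mu *: z -> mu <= lam) ->
  forall x, dotv x (A *m x) <= lam * sqnorm x.
Proof.
case: p A => // p A _ As lam_ub x.
have [z z1 zmax] := rayleigh_max_exists A.
apply: le_trans (zmax x) _; rewrite ler_wpM2r ?sqnorm_ge0 //.
apply: lam_ub (rayleigh_max_eigen As z1 zmax).
by rewrite -sqnorm_eq0 z1 oner_neq0.
Qed.

End Rayleigh.

Section Restriction.
Variable R : realType.
Variable n : nat.
Implicit Types (S : {set 'I_n}) (u x : 'cV[R]_n).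

Definition supported u S : Prop := forall i, i \notin S -> u i 0 = 0.

Definition restrv S u : 'cV[R]_#|S| := \col_j u (enum_val j) 0.

Lemma sum_supported S (F : 'I_n -> R) :
  (forall i, i \notin S -> F i = 0) -> \sum_i F i = \sum_(i in S) F i.
Proof.
move=> FS; rewrite [RHS]big_mkcond; apply: eq_bigr => i _.
by case: ifP => // /negbT /FS.
Qed.

Lemma card_supp_gt0 u : u != 0 -> (0 < #|supp u|)%N.
Proof.
move=> u0; rewrite lt0n cards_eq0; apply: contra u0 => /eqP supp0.
apply/eqP/matrixP => i j; rewrite (ord1 j) mxE; apply/eqP/negPn.
have : i \notin supp u by rewrite supp0 inE.
by rewrite inE.
Qed.

Lemma sqnorm_restrv S u : sqnorm (restrv S u) = \sum_(i in S) u i 0 ^+ 2.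
Proof. by rewrite [RHS]big_enum_val; apply: eq_bigr => j _; rewrite mxE. Qed.

Lemma sqnorm_restrv_supported S u : supported u S -> sqnorm (restrv S u) = sqnorm u.
Proof.
move=> uS; rewrite sqnorm_restrv [sqnorm u](@sum_supported S) // => i /uS ->.
by rewrite expr0n.
Qed.

Lemma dotv_restrv_supported S x u :
  supported u S -> dotv (restrv S x) (restrv S u) = dotv x u.
Proof.
move=> uS; rewrite [dotv x u](@sum_supported S) => [|i /uS ->]; last by rewrite mulr0.
by rewrite [RHS]big_enum_val; apply: eq_bigr => j _; rewrite !mxE.
Qed.

Lemma subSS_mul_restrv (A : 'M[R]_n) S u : supported u S ->
  Defs.subSS A S *m restrv S u = restrv S (A *m u).
Proof.
move=> uS; apply/matrixP => j k; rewrite !mxE (@sum_supported S) => [|i /uS ->].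
  by rewrite [RHS]big_enum_val; apply: eq_bigr => l _; rewrite !mxE.
by rewrite mulr0.
Qed.

Lemma trmx_subSS (A : 'M[R]_n) S : (Defs.subSS A S)^T = Defs.subSS A^T S.
Proof. by apply/matrixP => i j; rewrite !mxE. Qed.

Lemma subSS_rank_one (B : 'M[R]_n) (a : R) (v : 'cV[R]_n) S :
  Defs.subSS (B + a *: (v *m v^T)) S =
  Defs.subSS B S + a *: (restrv S v *m (restrv S v)^T).
Proof. by apply/matrixP => i j; rewrite !mxE !big_ord1 !mxE. Qed.

Lemma sum_sqr_mulmx_le (W : 'M[R]_n) S (D : R) u :
  spec_norm (Defs.subSS W S) <= D -> supported u S ->
  \sum_(i in S) (W *m u) i 0 ^+ 2 <= D ^+ 2 * sqnorm u.
Proof.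
move=> WD uS; rewrite -sqnorm_restrv -subSS_mul_restrv // -(sqnorm_restrv_supported uS).
rewrite -!sqr_norm2 -exprMn.
have WuD : norm2 (Defs.subSS W S *m restrv S u) <= D * norm2 (restrv S u).
  by apply: le_trans (norm2_mulmx_le _ _) _; rewrite ler_wpM2r ?norm2_ge0.
by rewrite ler_pXn2r ?nnegrE ?norm2_ge0 // (le_trans (norm2_ge0 _) WuD).
Qed.

End Restriction.

Section Thresholding.
Variable R : realType.
Variable n : nat.

Lemma sum_dominated_le (P Q : {set 'I_n}) (f g : 'I_n -> R) :
  (#|P| <= #|Q|)%N -> (forall j, j \in Q -> 0 <= g j) ->
  (forall i j, i \in P -> j \in Q -> f i <= g j) ->
  \sum_(i in P) f i <= \sum_(j in Q) g j.
Proof.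
move=> PQ g0 fg; have [Q0|Q0] := posnP #|Q|.
  move: PQ; rewrite Q0 leqn0 => /eqP/cards0_eq ->.
  by move/cards0_eq: Q0 ->; rewrite !big_set0.
(* average [f i <= g j] over the #|P| * #|Q| pairs *)
have Q0R : (0 : R) < #|Q|%:R by rewrite ltr0n.
have lhsE : #|Q|%:R * \sum_(i in P) f i = \sum_(j in Q) \sum_(i in P) f i.
  by rewrite sumr_const mulr_natl.
have rhsE : \sum_(j in Q) \sum_(i in P) g j = #|P|%:R * \sum_(j in Q) g j.
  by rewrite mulr_sumr; apply: eq_bigr => j _; rewrite sumr_const mulr_natl.
rewrite -(ler_pM2l Q0R) lhsE; apply: le_trans (_ : _ <= \sum_(j in Q) \sum_(i in P) g j) _.
  by apply: ler_sum => j jQ; apply: ler_sum => i iP; exact: fg.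
by rewrite rhsE ler_wpM2r ?ler_nat // sumr_ge0.
Qed.

Lemma sqnorm_thresh_residual (e v h : 'cV[R]_n) (a : R) (J F : {set 'I_n}) (r : nat) :
  top_entries (e + a *: v) r J -> (#|supp v| <= r)%N ->
  (forall i, h i 0 = if i \in J then (e + a *: v) i 0 else 0) ->
  J :|: supp v \subset F ->
  sqnorm (h - a *: v) <= 3 * \sum_(i in F) e i 0 ^+ 2.
Proof.
move=> [cardJ topJ] sparse_v hE JvF.
set g := e + a *: v in topJ hE.
have gE i : g i 0 = e i 0 + a * v i 0 by rewrite !mxE.
pose P := supp v :\: J; pose Q := J :\: supp v.
have PQ : (#|P| <= #|Q|)%N.
  have := cardsID J (supp v); have := cardsID (supp v) J.
  by rewrite finset.setIC /P /Q; lia.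
(* the entries of [g] that thresholding discards on [supp v] are dominated by kept noise entries *)
have lost_le : \sum_(i in P) g i 0 ^+ 2 <= \sum_(j in Q) e j 0 ^+ 2.
  apply: sum_dominated_le => // [j _|i j]; first exact: sqr_ge0.
  rewrite !inE negbK => /andP [iJ _] /andP [/eqP vj jJ].
  have := topJ _ _ jJ iJ; rewrite [g j 0]gE vj mulr0 addr0 => gij.
  by rewrite -[_ ^+ 2]real_normK ?num_real // -[e j 0 ^+ 2]real_normK ?num_real // ler_sqr.
have resid_le i : (h - a *: v) i 0 ^+ 2 <=
    (if i \in J then e i 0 ^+ 2 else 0) +
    (if i \in P then 2 * g i 0 ^+ 2 + 2 * e i 0 ^+ 2 else 0).
  rewrite !mxE hE gE /P !inE; case: (i \in J) => /=.
    by rewrite addrK addr0.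
  case: eqP => [->|_] /=; first by rewrite mulr0 subrr expr0n addr0.
  by rewrite add0r sqrrN add0r; have := sqr_ge0 (e i 0 + a * v i 0 + e i 0); nra.
apply: le_trans (ler_sum _ (fun i _ => resid_le i)) _.
rewrite big_split /= -!big_mkcond /= big_split /= -!mulr_sumr.
apply: le_trans (_ : _ <= \sum_(i in J) e i 0 ^+ 2 +
    (2 * \sum_(j in Q) e j 0 ^+ 2 + 2 * \sum_(i in P) e i 0 ^+ 2)) _.
  by rewrite lerD2l lerD2r ler_pM2l.
rewrite !mulr_sumr (big_mkcond (mem J)) (big_mkcond (mem Q)) (big_mkcond (mem P)).
rewrite (big_mkcond (mem F)) -!big_split /=.
apply: ler_sum => i _ /=; rewrite /P /Q !finset.in_setD.
have := sqr_ge0 (e i 0); have [iF|iF] := boolP (i \in F).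
  by case: (i \in J); case: (i \in supp v) => /=; lra.
have /norP [/negbTE -> /negbTE ->] : ~~ ((i \in J) || (i \in supp v)).
  by apply: contra iF => iJv; apply: (fintype.subsetP JvF); rewrite finset.in_setU.
by rewrite /=; lra.
Qed.

Lemma sin2_perturb_le (v r : 'cV[R]_n) (a : R) :
  sqnorm v = 1 -> 0 < a ^+ 2 -> 4 * sqnorm r <= a ^+ 2 ->
  0 < sqnorm (a *: v + r) /\
  1 - dotv v (a *: v + r) ^+ 2 / sqnorm (a *: v + r) <= 4 * sqnorm r / a ^+ 2.
Proof.
move=> v1 a0 ra.
have hE : sqnorm (a *: v + r) = a ^+ 2 + 2 * a * dotv v r + sqnorm r.
  by rewrite sqnormD sqnormZ v1 dotvZl mulr1 mulrA.
have vh : dotv v (a *: v + r) = a + dotv v r.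
  by rewrite dotvDr dotvZr dotvv v1 mulr1.
have cs : dotv v r ^+ 2 <= sqnorm r by have := cauchy_schwarz v r; rewrite v1 mul1r.
have h_ge : a ^+ 2 / 4 <= sqnorm (a *: v + r).
  by rewrite hE; have := sqr_ge0 (a + 2 * dotv v r); nra.
have h0 : 0 < sqnorm (a *: v + r) by apply: lt_le_trans h_ge; rewrite divr_gt0.
split=> //; rewrite vh.
have -> : 1 - (a + dotv v r) ^+ 2 / sqnorm (a *: v + r) =
          (sqnorm (a *: v + r) - (a + dotv v r) ^+ 2) / sqnorm (a *: v + r).
  by field; rewrite gt_eqF.
rewrite ler_pdivrMr // {1}hE.
have ratio : 4 * sqnorm r / a ^+ 2 * (a ^+ 2 / 4) = sqnorm r.
  by field; rewrite -sqrf_eq0 gt_eqF.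
have : 0 <= 4 * sqnorm r / a ^+ 2 by rewrite divr_ge0 ?sqr_ge0 // mulr_ge0 ?sqnorm_ge0.
have := sqr_ge0 (dotv v r); nra.
Qed.

End Thresholding.

Section SepTPower.
Variable R : realType.
Variables (n k' : nat) (Gam W : 'M[R]_n) (v : 'cV[R]_n) (theta gamma D : R).
Hypotheses (Gam_def : Gam = W + theta *: (v *m v^T)) (Gam_sym : Gam^T = Gam).
Hypotheses (theta_gt0 : 0 < theta) (gamma_gt0 : 0 < gamma) (gamma_lt1 : gamma < 1).
Hypotheses (D_ge0 : 0 <= D) (D_small : 48 * D ^+ 2 <= theta ^+ 2 * gamma ^+ 2).
Hypothesis W_spec : forall F : {set 'I_n}, (0 < #|F|)%N -> (#|F| <= 3 * k')%N ->
  spec_norm (Defs.subSS W F) <= D.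
Hypotheses (v_unit : sqnorm v = 1) (v_sparse : (#|supp v| <= k')%N).

Lemma noise_le_signal : 4 * D <= theta * gamma.
Proof.
have tg : theta * gamma \is Num.nneg by rewrite nnegrE mulr_ge0 // ltW.
have D4 : 4 * D \is Num.nneg by rewrite nnegrE mulr_ge0.
rewrite -(ler_sqr D4 tg) /= !exprMn.
by have := D_small; have := sqr_ge0 D; lra.
Qed.

Lemma sep_output_aligned (S : {set 'I_n}) (w0 : 'cV[R]_n) :
  (0 < #|S|)%N -> (#|S| <= 3 * k')%N -> gamma <= \sum_(i in S) v i 0 ^+ 2 ->
  top_eigvec Gam S w0 ->
  [/\ sqnorm w0 = 1, supported w0 S & gamma / 2 <= dotv v w0 ^+ 2].
Proof.
move=> S0 S3 v_mass [y [lam [/sqnorm_unit y1 Ay lam_top w0y w0S]]].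
have yE : restrv S w0 = y by apply/matrixP => j i; rewrite (ord1 i) mxE w0y.
have w0_unit : sqnorm w0 = 1 by rewrite -(sqnorm_restrv_supported w0S) yE.
split=> //; rewrite -(dotv_restrv_supported _ w0S) yE.
set x := restrv S v; set B := Defs.subSS W S.
have AE : Defs.subSS Gam S = B + theta *: (x *m x^T) by rewrite Gam_def subSS_rank_one.
have A_sym : (Defs.subSS Gam S)^T = Defs.subSS Gam S by rewrite trmx_subSS Gam_sym.
have q_ge : gamma <= sqnorm x by rewrite sqnorm_restrv.
have q_gt0 : 0 < sqnorm x by apply: lt_le_trans q_ge.
have BD : spec_norm B <= D := W_spec S0 S3.
(* Rayleigh at [x] bounds [lam] from below, Rayleigh at [y] computes it *)
have lam_ge : dotv x (B *m x) + theta * sqnorm x ^+ 2 <= lam * sqnorm x.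
  have := rayleigh_le_eigval_ub S0 A_sym lam_top x.
  by rewrite AE mulmx_rank_one dotvDr dotvZr dotvv -mulrA -expr2.
have lamE : lam = dotv y (B *m y) + theta * dotv x y ^+ 2.
  have : dotv y (Defs.subSS Gam S *m y) = lam by rewrite Ay dotvZr dotvv y1 mulr1.
  by rewrite AE mulmx_rank_one dotvDr dotvZr (dotvC y x) -mulrA -expr2 => <-.
have /andP [xBx _] : - (D * sqnorm x) <= dotv x (B *m x) <= D * sqnorm x.
  by rewrite -ler_norml; exact: normr_quad_le.
have /andP [_ yBy] : - D <= dotv y (B *m y) <= D.
  by rewrite -ler_norml -[D]mulr1 -y1; exact: normr_quad_le.
have theta_q : theta * sqnorm x - D <= lam.
  by rewrite -(ler_pM2r q_gt0); nra.
have := noise_le_signal; have : theta * gamma <= theta * sqnorm x by rewrite ler_pM2l.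
move=> ? ?; rewrite ler_pdivrMr // -(ler_pM2l theta_gt0); lra.
Qed.

Lemma tpower_step (w h : 'cV[R]_n) (Sw : {set 'I_n}) :
  sqnorm w = 1 -> (#|Sw| <= k')%N -> supported w Sw ->
  gamma / 2 <= dotv v w ^+ 2 -> hard_thresh k' (Gam *m w) h ->
  [/\ 0 < sqnorm h, exists2 J : {set 'I_n}, (#|J| <= k')%N & supported h J &
      1 - dotv v h ^+ 2 / sqnorm h <= 24 * D ^+ 2 / (theta ^+ 2 * gamma)].
Proof.
move=> w1 Sw_k wSw w_al [J [[cardJ topJ] hE]].
set a := theta * dotv v w.
have GamwE : Gam *m w = W *m w + a *: v by rewrite Gam_def mulmx_rank_one.
rewrite GamwE in topJ hE.
pose F := J :|: supp v :|: Sw.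
have F3 : (#|F| <= 3 * k')%N.
  have := (leq_card_setU (J :|: supp v) Sw).1; have := (leq_card_setU J (supp v)).1.
  by rewrite /F cardJ; have := geq_minl k' n; move: v_sparse Sw_k; lia.
have F0 : (0 < #|F|)%N.
  have v0 : v != 0 by rewrite -sqnorm_eq0 v_unit oner_neq0.
  apply: leq_trans (card_supp_gt0 v0) (subset_leq_card _).
  exact: fintype.subset_trans (finset.subsetUr J _) (finset.subsetUl _ Sw).
have noise : \sum_(i in F) (W *m w) i 0 ^+ 2 <= D ^+ 2.
  rewrite -[D ^+ 2]mulr1 -w1; apply: sum_sqr_mulmx_le (W_spec F0 F3) _.
  by move=> i; rewrite !finset.in_setU => /norP [_ /wSw].
have resid : sqnorm (h - a *: v) <= 3 * D ^+ 2.
  apply: le_trans (sqnorm_thresh_residual (F := F) (conj cardJ topJ) _ hE _) _.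
  - by rewrite leq_min v_sparse /= -[X in (_ <= X)%N]card_ord max_card.
  - exact: finset.subsetUl.
  - by rewrite ler_pM2l.
have tg : 0 < theta ^+ 2 * (gamma / 2) by rewrite mulr_gt0 ?exprn_gt0 ?divr_gt0.
have a2 : theta ^+ 2 * (gamma / 2) <= a ^+ 2 by rewrite /a exprMn ler_pM2l // exprn_gt0.
have tgg : theta ^+ 2 * gamma ^+ 2 <= theta ^+ 2 * gamma.
  by rewrite ler_wpM2l ?sqr_ge0 // expr2 ger_pMl // ltW.
have [|h_gt0 sin2_le] := sin2_perturb_le (r := h - a *: v) v_unit (lt_le_trans tg a2).
  by move: a2 resid tgg D_small; lra.
have hE' : a *: v + (h - a *: v) = h by rewrite addrC subrK.
rewrite hE' in h_gt0 sin2_le; split=> //.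
  exists J; first by rewrite cardJ geq_minl.
  by move=> i iJ; rewrite hE (negbTE iJ).
apply: le_trans sin2_le _; rewrite ler_pdivrMr ?(lt_le_trans tg a2) //.
have bound_ge0 : 0 <= 24 * D ^+ 2 / (theta ^+ 2 * gamma).
  by rewrite divr_ge0 ?mulr_ge0 ?sqr_ge0 // ltW.
have := ler_wpM2l bound_ge0 a2.
have -> : 24 * D ^+ 2 / (theta ^+ 2 * gamma) * (theta ^+ 2 * (gamma / 2)) = 12 * D ^+ 2.
  by field; rewrite !gt_eqF.
by move: resid; lra.
Qed.

Lemma tpower_aligned (w0 : 'cV[R]_n) (S0 : {set 'I_n}) (w : nat -> 'cV[R]_n) :
  sqnorm w0 = 1 -> (#|S0| <= k')%N -> supported w0 S0 ->
  gamma / 2 <= dotv v w0 ^+ 2 -> tpower_run Gam k' w0 w ->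
  forall T, (1 <= T)%N -> 1 - dotv v (w T) ^+ 2 <= 24 * D ^+ 2 / (theta ^+ 2 * gamma).
Proof.
move=> w01 S0k w0S w0_al [w_0 w_succ].
have bound_half : 24 * D ^+ 2 / (theta ^+ 2 * gamma) <= 1 / 2.
  have tg : 0 < theta ^+ 2 * gamma by rewrite mulr_gt0 ?exprn_gt0.
  have tgg : theta ^+ 2 * gamma ^+ 2 <= theta ^+ 2 * gamma.
    by rewrite ler_wpM2l ?sqr_ge0 // expr2 ger_pMl // ltW.
  by rewrite ler_pdivrMr //; move: D_small tgg; lra.
suff inv t : [/\ sqnorm (w t) = 1,
    exists2 S : {set 'I_n}, (#|S| <= k')%N & supported (w t) S,
    gamma / 2 <= dotv v (w t) ^+ 2 &
    (0 < t)%N -> 1 - dotv v (w t) ^+ 2 <= 24 * D ^+ 2 / (theta ^+ 2 * gamma)].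
  by move=> T T1; have [_ _ _] := inv T; apply.
elim: t => [|t [wt1 [S Sk wtS] wt_al _]]; first by rewrite w_0; split=> //; exists S0.
have [h [thr ->]] := w_succ t.
have [h0 [J Jk hJ] sin2] := tpower_step wt1 Sk wtS wt_al thr.
have dotE : dotv v ((norm2 h)^-1 *: h) ^+ 2 = dotv v h ^+ 2 / sqnorm h.
  by rewrite dotvZr exprMn exprVn sqr_norm2 mulrC.
split.
- by rewrite sqnormZ exprVn sqr_norm2 mulVf ?gt_eqF.
- by exists J => // i iJ; rewrite mxE hJ ?mulr0.
- by rewrite dotE; move: sin2 bound_half gamma_lt1; lra.
- by rewrite dotE.
Qed.

Lemma sep_tpower_sin2_le (S0 : {set 'I_n}) (w0 : 'cV[R]_n) (w : nat -> 'cV[R]_n) :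
  (0 < #|S0|)%N -> (#|S0| <= k')%N -> gamma <= \sum_(i in S0) v i 0 ^+ 2 ->
  top_eigvec Gam S0 w0 -> tpower_run Gam k' w0 w ->
  forall T, (1 <= T)%N -> 1 - dotv v (w T) ^+ 2 <= 24 * D ^+ 2 / (theta ^+ 2 * gamma).
Proof.
move=> S0_gt0 S0k mass top; have S03 : (#|S0| <= 3 * k')%N by lia.
have [w01 w0S w0_al] := sep_output_aligned S0_gt0 S03 mass top.
exact: tpower_aligned w01 S0k w0S w0_al.
Qed.

End SepTPower.

Section SpikedModel.
Variable R : realType.
Variables (n m : nat) (X : 'M[R]_(n, m)) (theta : R) (v : 'cV[R]_n).

Lemma Gamma_hat_sym : (Gamma_hat X)^T = Gamma_hat X.
Proof.
apply/matrixP => i j; rewrite !mxE eq_sym; congr (_ * _ - _).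
by apply: eq_bigr => l _; rewrite !mxE mulrC.
Qed.

Lemma Gamma_hat_rank_one : Gamma_hat X = W_mat X theta v + theta *: (v *m v^T).
Proof. by rewrite subrK. Qed.

Lemma event_E_spec_le (C0 : R) (N : nat) (F : {set 'I_n}) :
  event_E X theta v C0 -> 0 <= C0 * (1 + theta) -> 0 <= ln (n%:R : R) ->
  (0 < #|F|)%N -> (#|F| <= N)%N ->
  spec_norm (Defs.subSS (W_mat X theta v) F) <=
    C0 * (1 + theta) * Num.sqrt (N%:R * ln (n%:R : R) / m%:R).
Proof.
move=> hE c0 L0 F0 FN; apply: le_trans (hE F F0) _; rewrite ler_wpM2l //.
rewrite ler_sqrt ?mulr_ge0 ?invr_ge0 ?ler0n //.
by rewrite ler_wpM2r ?invr_ge0 ?ler0n // ler_wpM2r // ler_nat.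
Qed.

End SpikedModel.

Lemma card_SEP_support (R : realType) n (Gam : 'M[R]_n) k S e w0 :
  SEP_run Gam k S e w0 -> (1 <= k)%N -> #|S k| = k.
Proof.
move=> [[j [S1 _]] step _]; case: k step => // -[|k] step _; first by rewrite S1 cards1.
by have [_ [->]] := step k.+1 (leqnn _).
Qed.

Section Constants.
Variable R : realType.
Variables (C0 theta gamma K L M : R).
Hypotheses (C0_gt0 : 0 < C0) (theta_gt0 : 0 < theta) (gamma_gt0 : 0 < gamma)
  (gamma_lt1 : gamma < 1) (K_ge0 : 0 <= K) (L_ge0 : 0 <= L) (M_gt0 : 0 < M).

Let D := C0 * (1 + theta) * Num.sqrt (3 * (K * L / M)).

Lemma sqr_noise_level : D ^+ 2 = 3 * (C0 ^+ 2 * (1 + theta) ^+ 2 * K * L) / M.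
Proof.
have s0 : 0 <= 3 * (K * L / M) by rewrite mulr_ge0 // divr_ge0 ?mulr_ge0 // ltW.
by rewrite /D !exprMn sqr_sqrtr //; ring.
Qed.

Lemma noise_level_small :
  144 * C0 ^+ 2 * (1 + theta) ^+ 2 / (theta ^+ 2 * gamma ^+ 2) * K * L <= M ->
  48 * D ^+ 2 <= theta ^+ 2 * gamma ^+ 2.
Proof.
have tg : 0 < theta ^+ 2 * gamma ^+ 2 by rewrite mulr_gt0 ?exprn_gt0.
have -> : 144 * C0 ^+ 2 * (1 + theta) ^+ 2 / (theta ^+ 2 * gamma ^+ 2) * K * L =
          144 * (C0 ^+ 2 * (1 + theta) ^+ 2 * K * L) / (theta ^+ 2 * gamma ^+ 2).
  by field; rewrite !gt_eqF.
have -> : 48 * D ^+ 2 = 144 * (C0 ^+ 2 * (1 + theta) ^+ 2 * K * L) / M.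
  by rewrite sqr_noise_level; field; rewrite gt_eqF.
by rewrite !ler_pdivrMr // [M * _]mulrC.
Qed.

Lemma sin_bound_le :
  Num.sqrt (24 * D ^+ 2 / (theta ^+ 2 * gamma)) <=
  9 * C0 * (1 + theta) / (theta * gamma) * Num.sqrt (K * L / M).
Proof.
have s0 : 0 <= K * L / M by rewrite divr_ge0 ?mulr_ge0 // ltW.
set Y := 9 * C0 * (1 + theta) / (theta * gamma) * Num.sqrt (K * L / M).
have Y0 : 0 <= Y by rewrite mulr_ge0 ?sqrtr_ge0 // divr_ge0 ?mulr_ge0 // ltW // addr_gt0.
rewrite -(ger0_norm Y0) -sqrtr_sqr ler_sqrt ?sqr_ge0 //.
set c := C0 ^+ 2 * (1 + theta) ^+ 2 * K * L.
have tg : 0 < theta ^+ 2 * gamma ^+ 2 by rewrite mulr_gt0 ?exprn_gt0.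
have -> : Y ^+ 2 = 81 * c / M / (theta ^+ 2 * gamma ^+ 2).
  rewrite /Y exprMn sqr_sqrtr //.
  by rewrite /c; field; rewrite !gt_eqF.
have -> : 24 * D ^+ 2 / (theta ^+ 2 * gamma) =
          72 * c / M * gamma / (theta ^+ 2 * gamma ^+ 2).
  by rewrite sqr_noise_level /c; field; rewrite !gt_eqF.
rewrite ler_pM2r ?invr_gt0 //.
have cM : 0 <= c / M.
  by rewrite divr_ge0 ?(ltW M_gt0) // /c; do 3?apply: mulr_ge0 => //; exact: sqr_ge0.
by move: gamma_lt1 cM; nra.
Qed.

End Constants.

Theorem theorem2 (R : realType) (C0 : R) (hC0 : 0 < C0) :
  exists C1 C2 : R, 0 < C1 /\ 0 < C2 /\
  forall (n m k k' : nat) (theta gamma : R) (v : 'cV[R]_n) (X : 'M[R]_(n, m))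
         (S : nat -> {set 'I_n}) (e : nat -> 'cV[R]_n) (w0 : 'cV[R]_n)
         (w : nat -> 'cV[R]_n),
    (2 <= n)%N -> (1 <= m)%N -> 0 < theta -> (1 <= k <= n)%N ->
    norm2 v = 1 -> (#|supp v| <= k)%N ->
    event_E X theta v C0 ->
    0 < gamma < 1 -> (k <= k')%N ->
    SEP_run (Gamma_hat X) k S e w0 ->
    Num.sqrt gamma <= restr_norm v (S k) ->
    tpower_run (Gamma_hat X) k' w0 w ->
    C1 * (1 + theta) ^+ 2 / (theta ^+ 2 * gamma ^+ 2) * k'%:R * ln (n%:R : R) <= m%:R ->
    forall T : nat, (1 <= T)%N ->
      sin_angle (w T) v <=
        C2 * (1 + theta) / (theta * gamma) * Num.sqrt (k'%:R * ln (n%:R : R) / m%:R).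
Proof.
exists (144 * C0 ^+ 2), (9 * C0); do !split; rewrite ?mulr_gt0 ?exprn_gt0 //.
move=> n m k k' theta gamma v X S e w0 w n2 m1 theta0 /andP [k1 _] v1 v_k hE
  /andP [gamma0 gamma1] kk' sep mass run m_large T T1.
have L0 : 0 <= ln (n%:R : R) by rewrite ln_ge0 // ler1n; lia.
have M0 : (0 : R) < m%:R by rewrite ltr0n.
have C0theta : 0 <= C0 * (1 + theta) by rewrite mulr_ge0 ?addr_ge0 // ltW.
set D := C0 * (1 + theta) * Num.sqrt (3 * (k'%:R * ln (n%:R : R) / m%:R)).
have W_spec (F : {set 'I_n}) : (0 < #|F|)%N -> (#|F| <= 3 * k')%N ->
    spec_norm (Defs.subSS (W_mat X theta v) F) <= D.
  move=> F0 F3; apply: le_trans (event_E_spec_le hE C0theta L0 F0 F3) _.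
  by rewrite /D natrM !mulrA.
have Sk : #|S k| = k := card_SEP_support sep k1.
have [_ _ top] := sep.
have mass' : gamma <= \sum_(i in S k) v i 0 ^+ 2.
  by move: mass; rewrite ler_sqrt // sumr_ge0 // => i _; exact: sqr_ge0.
have := sep_tpower_sin2_le (Gamma_hat_rank_one X theta v) (Gamma_hat_sym X) theta0
  gamma0 gamma1 (mulr_ge0 C0theta (sqrtr_ge0 _))
  (noise_level_small theta0 gamma0 (ler0n _ k') L0 M0 m_large) W_spec
  (sqnorm_unit v1) (leq_trans v_k kk') _ _ mass' top run T1.
rewrite Sk k1 kk' => /(_ isT isT) sin2_le.
apply: le_trans (sin_bound_le hC0 theta0 gamma0 gamma1 (ler0n _ k') L0 M0).
by rewrite /sin_angle dotvC ler_wsqrtr.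
Qed.
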